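(* Let $3\le n\le k$ be integers, $\mu>0$ and $q\in[0,1]$, and let $X$ be the discrete-time Markov chain on $\mathbb{N}^{n-1}$ described in the context. If $X$ is stable with stationary distribution $\pi$, then the capacity $$C:=q\mu\,(k-(n-1))\sum_{\mathbf{x}\in R_0}\pi(\mathbf{x})$$ equals $C=\dfrac{q\mu k}{n}$.
   Context: $\mathbb{N}=\{0,1,2,\dots\}$. Vectors have dimension $n-1$; $\mathbf{0}$, $\mathbf{1}$ are the all-zero and all-one vectors, $\mathbf{e}_l$ the $l$-th unit vector. For $j=0,\dots,n-1$, $R_j$ is the set of $\mathbf{x}\in\mathbb{N}^{n-1}$ with exactly $j$ zero entries (so $R_0=\{\mathbf{x}:x_i\ge1\ \forall i\}$, $R_{n-1}=\{\mathbf{0}\}$). $X$ is the Markov chain on $\mathbb{N}^{n-1}$ with nonzero transition probabilities: from $\mathbf{x}\in R_0$, to $\mathbf{x}-\mathbf{1}$ w.p. $\frac{k-(n-1)}{k}$ and to $\mathbf{x}+\mathbf{e}_l$ w.p. $\frac1k$ ($l=1,\dots,n-1$); from $\mathbf{x}\in R_j$, $1\le j\le n-2$, to $\mathbf{x}+\mathbf{e}_l$ w.p. $\frac{k-(n-1-j)}{kj}$ if $x_l=0$ and w.p. $\frac1k$ if $x_l\ge1$; from $\mathbf{0}$ to $\mathbf{e}_l$ w.p. $\frac1{n-1}$. It is the uniformization at rate $k\mu$ of a continuous-time chain modelling a switch with $k$ identical links each generating Bell pairs at rate $\mu$, which performs an $n$-party swap (succeeding w.p. $q$) when $n$ distinct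 links hold pairs. Stable means positive recurrent. *)

From HB Require Import structures.
From mathcomp Require Import all_boot all_order all_algebra.
From mathcomp Require Import all_classical all_reals all_analysis.
Set Implicit Arguments. Unset Strict Implicit. Unset Printing Implicit Defensive.
Import Order.TTheory GRing.Theory Num.Theory.
Local Open Scope ring_scope.
Local Open Scope classical_set_scope.

Definition state (n : nat) := {ffun 'I_n.-1 -> nat}.

(* number of zero entries: x \in R_j iff nzeros x = j *)
Definition nzeros n (x : state n) : nat := #|[set i | x i == 0%N]|.

Definition R0 n : set (state n) := [set x | nzeros x = 0%N].

Definition incr n (x : state n) (l : 'I_n.-1) : state n :=
  [ffun i => (x i + (i == l))%N].

(* x - 1 (used only for x in R_0) *)
Definition decr1 n (x : state n) : state n := [ffun i => (x i).-1].

(* Transition matrix of X (uniformization at rate k mu). *)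
Definition P (R : realType) (n k : nat) (x y : state n) : R :=
  let j := nzeros x in
  if j == 0%N then
    (if y == decr1 x then (k%:R - (n.-1)%:R) / k%:R
     else if [exists l, y == incr x l] then 1 / k%:R else 0)
  else if j == n.-1 then
    (if [exists l, y == incr x l] then 1 / (n.-1)%:R else 0)
  else
    match [pick l | y == incr x l] with
    | Some l => if x l == 0%N
                then (k%:R - (n.-1 - j)%:R) / (k%:R * j%:R)
                else 1 / k%:R
    | None => 0
    end.

(* First-passage probabilities: fpt m x y = Pr_x(first visit to y at time m+1). *)
Fixpoint fpt (R : realType) (n k : nat) (m : nat) (x y : state n) : \bar R :=
  match m with
  | 0%N => (P R k x y)%:E
  | m'.+1 => \esum_(z in [set z | z <> y]) ((P R k x z)%:E * fpt R k m' z y)%E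
  end.

Definition positive_recurrent (R : realType) (n k : nat) (x : state n) : Prop :=
  \esum_(m in [set: nat]) fpt R k m x x = 1%E /\
  (\esum_(m in [set: nat]) ((m.+1)%:R%:E * fpt R k m x x)%E < +oo)%E.

Definition stable (R : realType) (n k : nat) : Prop :=
  forall x : state n, positive_recurrent R k x.

Definition stationary_distribution (R : realType) (n k : nat) (pi : state n -> R) : Prop :=
  (forall x, 0 <= pi x) /\
  \esum_(x in [set: state n]) (pi x)%:E = 1%E /\
  (forall y, \esum_(x in [set: state n]) ((pi x)%:E * (P R k x y)%:E)%E = (pi y)%:E).

From HB Require Import structures.
From mathcomp Require Import all_boot all_order all_algebra.
From mathcomp Require Import all_classical all_reals all_analysis.
From mathcomp Require Import zify ring.
Import Order.TTheory GRing.Theory Num.Theory.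
Local Open Scope ring_scope.
Local Open Scope classical_set_scope.

(* The height |x| = x_1 + ... + x_(n-1) of the state moves by +1 (to some
   x + e_l) or by -(n-1) (to x - 1, possible only from R_0, with probability
   (k-(n-1))/k).  Stationarity balances the probability flow across every cut
   {|x| <= m}: what leaves level m upwards equals what jumps down from the
   levels m+1, ..., m+n-1.  Summing these balances over m gives
   E_pi[p_up] = (n-1) E_pi[p_down]; as p_up + p_down = 1 this forces
   E_pi[p_down] = 1/n, i.e. (k-(n-1))/k * pi(R_0) = 1/n. *)

Lemma sumr_if (V : nmodType) (m : nat) (p : pred 'I_m) (a b : V) :
  \sum_(i < m) (if p i then a else b) = a *+ #|p| + b *+ (m - #|p|).
Proof.
rewrite (bigID p) /=; under eq_bigr => i -> do [].
under [X in _ + X]eq_bigr => i /negbTE -> do [].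
rewrite !sumr_const; congr (_ + _ *+ _).
by rewrite -[X in _ = (X - _)%N]card_ord -(cardC p) addKn.
Qed.

Section esum_facts.
Context {R : realType}.
Local Open Scope ereal_scope.

Lemma fin_num_addeI (a b c : \bar R) : a \is a fin_num -> a + b = a + c -> b = c.
Proof.
by move=> afin /(congr1 (fun z => z - a)); rewrite !(addeC a) !addeK.
Qed.

Lemma esum_delta (T : choiceType) (t : T) (v : \bar R) : 0 <= v ->
  \esum_(y in [set: T]) (if y == t then v else 0) = v.
Proof.
move=> v0; rewrite -[RHS](@esum_set1 R T t (fun=> v)) // [RHS]esum_mkcond.
by apply: eq_esum => y _; rewrite in_set1.
Qed.

Lemma esum_seq_supp {T : choiceType} {A : set T} {a : T -> \bar R} (s : seq T) :
  uniq s -> (forall y, 0 <= a y) -> (forall y, y \notin s -> a y = 0) ->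
  \esum_(y in A) a y = \sum_(t <- s | t \in A) a t.
Proof.
move=> s_uniq a_ge0 a_supp; rewrite esum_mkcond big_mkcond /=.
rewrite (eq_esum (b := fun y => \sum_(t <- s)
    (if y == t then (if t \in A then a t else 0) else 0))); last first.
  move=> y _; case: (boolP (y \in s)) => ys.
    rewrite (bigD1_seq y) //= eqxx big1 ?adde0 // => t /negbTE.
    by rewrite eq_sym => ->.
  rewrite big1_seq ?a_supp ?if_same // => t /andP[_ ts].
  by case: eqP => // yt; move: ys; rewrite yt ts.
rewrite esum_sum; last by move=> y t _ _; case: ifP => //; case: ifP.
by apply: eq_bigr => t _; rewrite esum_delta //; case: ifP.
Qed.

Lemma exchange_esum (T1 T2 : choiceType) (I : set T1) (J : set T2)
    (a : T1 -> T2 -> \bar R) : (forall i j, 0 <= a i j) ->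
  \esum_(i in I) \esum_(j in J) a i j = \esum_(j in J) \esum_(i in I) a i j.
Proof.
move=> a_ge0; rewrite !esum_esum //.
rewrite (reindex_esum (J `*`` (fun=> I)) _ (fun x => (x.2, x.1))) //.
split=> //=.
- by move=> [i j] [/=].
- by move=> [i1 i2] [j1 j2] /= _ _ [] -> ->.
- by move=> [i1 i2] [Pi1 Qi2] /=; exists (i2, i1).
Qed.

Lemma esumZl (T : choiceType) (S : set T) (a : T -> \bar R) (r : R) :
  (0 <= r)%R -> (forall i, 0 <= a i) ->
  \esum_(i in S) (r%:E * a i) = r%:E * \esum_(i in S) a i.
Proof.
move=> r_ge0 a_ge0; rewrite /esum -ereal_supZl //; last first.
  by apply/set0P; exists 0; exists set0; [exact: fsets_set0|rewrite fsbig_set0].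
rewrite image_comp; congr ereal_sup; apply: eq_imagel => A _ /=.
by rewrite ge0_mule_fsumr.
Qed.

Lemma esum_window (h w : nat) (c : \bar R) : (w <= h)%N -> 0 <= c ->
  \esum_(m in [set: nat]) (if (m < h <= m + w)%N then c else 0) = c *+ w.
Proof.
move=> wh c0; rewrite (esum_seq_supp (index_iota (h - w) h)); last 3 first.
- exact: iota_uniq.
- by move=> m; case: ifP.
- by move=> m; rewrite mem_index_iota => hm; rewrite ifF //; apply/negbTE; lia.
rewrite (eq_bigl xpredT) => [|m]; last by rewrite in_setT.
rewrite big_nat_cond (eq_bigr (fun=> c)) => [|m /andP[hm _]]; last by rewrite ifT //; lia.
by rewrite -big_nat_cond sumr_const_nat subKn.
Qed.

End esum_facts.

Definition flow {R : realType} {T : choiceType} (K : T -> T -> R) (pi : T -> R)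
    (A B : set T) : \bar R :=
  \esum_(x in A) ((pi x)%:E * \esum_(y in B) (K x y)%:E)%E.

Section flow_balance.
Variables (R : realType) (T : choiceType) (K : T -> T -> R) (pi : T -> R).
Hypotheses (K_ge0 : forall x y, 0 <= K x y)
  (K_stochastic : forall x, \esum_(y in [set: T]) (K x y)%:E = 1%E)
  (pi_ge0 : forall x, 0 <= pi x)
  (pi_sum1 : \esum_(x in [set: T]) (pi x)%:E = 1%E)
  (pi_invariant : forall y,
     \esum_(x in [set: T]) ((pi x)%:E * (K x y)%:E)%E = (pi y)%:E).
Local Open Scope ereal_scope.

Let EFin_pi_ge0 x : 0 <= (pi x)%:E. Proof. by rewrite lee_fin. Qed.
Let EFin_K_ge0 x y : 0 <= (K x y)%:E. Proof. by rewrite lee_fin. Qed.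

Let flow_ge0 (B : set T) x : 0 <= (pi x)%:E * \esum_(y in B) (K x y)%:E.
Proof. by rewrite mule_ge0 // esum_ge0. Qed.

Lemma flow_balance (L : set T) : flow K pi L (~` L) = flow K pi (~` L) L.
Proof.
have mass_in : \esum_(y in L) (pi y)%:E = flow K pi setT L.
  under eq_esum do rewrite -pi_invariant.
  rewrite exchange_esum => [|x y]; last by rewrite mule_ge0.
  by apply: eq_esum => x _; rewrite esumZl.
have mass_out : \esum_(y in L) (pi y)%:E = flow K pi L L + flow K pi L (~` L).
  rewrite -esumD //; apply: eq_esum => x _.
  rewrite -ge0_muleDr ?esum_ge0 //.
  by rewrite -[LHS]mule1 -(K_stochastic x) (esumID L) // !setTI.
have mass_lt : \esum_(y in L) (pi y)%:E < +oo.
  have := pi_sum1; rewrite (esumID L) // !setTI => mass_sum.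
  apply: (@le_lt_trans _ _ 1%E); last exact: ltry.
  by rewrite -mass_sum leeDl // esum_ge0.
have flowLL_fin : flow K pi L L \is a fin_num.
  rewrite ge0_fin_numE ?esum_ge0 //; apply: le_lt_trans mass_lt.
  by rewrite mass_out leeDl // esum_ge0.
apply: (fin_num_addeI _ _ _ flowLL_fin).
by rewrite -mass_out mass_in /flow (esumID L) // !setTI.
Qed.

End flow_balance.

Section switch_chain.
Variables (R : realType) (n k : nat).
Hypotheses (n_gt1 : (1 < n)%N) (n_le_k : (n <= k)%N).
Implicit Types (x y : state n).

Definition height x : nat := \sum_(i < n.-1) x i.

Definition pdown x : R :=
  if nzeros x == 0%N then (k%:R - (n.-1)%:R) / k%:R else 0.

Definition pup x : R := \sum_(l < n.-1) P R k x (incr x l).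

Lemma incr_inj x : injective (incr x).
Proof.
move=> l l' /(congr1 (fun y : state n => y l)); rewrite !ffunE eqxx /=.
by move=> /addnI; case: eqP.
Qed.

Lemma decr1_neq_incr x l : decr1 x != incr x l.
Proof.
by apply/eqP => /(congr1 (fun y : state n => y l)); rewrite !ffunE eqxx /=; lia.
Qed.

Lemma height_incr x l : height (incr x l) = (height x).+1.
Proof.
rewrite /height (eq_bigr (fun i => x i + (i == l))%N) => [|i _]; last by rewrite ffunE.
rewrite big_split /= -addn1; congr (_ + _)%N.
by rewrite (bigD1 l) //= eqxx big1 // => i /negbTE ->.
Qed.

Lemma height_decr1 x : (height (decr1 x) <= height x)%N.
Proof. by apply: leq_sum => i _; rewrite ffunE leq_pred. Qed.

Lemma height_decr1_R0 x : nzeros x = 0%N -> height (decr1 x) + n.-1 = height x.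
Proof.
move=> /card0_eq x_pos; rewrite /height.
rewrite [RHS](eq_bigr (fun i => decr1 x i + 1)%N) => [|i _].
  by rewrite big_split /= sum_nat_const card_ord muln1.
rewrite ffunE addn1 prednK // lt0n.
by apply: contraFN (x_pos i) => xi0; exact: mem_set.
Qed.

Lemma k_neq0 : k%:R != 0 :> R.
Proof. by rewrite pnatr_eq0 -lt0n; lia. Qed.

Lemma nzerosE x : nzeros x = #|[pred i | x i == 0%N]|.
Proof. by apply: eq_card => i; rewrite inE; apply/idP/idP => [/set_mem|/mem_set]. Qed.

Lemma nzeros_le x : (nzeros x <= n.-1)%N.
Proof. by rewrite nzerosE -[leqRHS]card_ord max_card. Qed.

Lemma P_ge0 x y : 0 <= P R k x y.
Proof.
have n1_le_k : (n.-1 <= k)%N by lia.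
rewrite /P; case: ifP => _.
  case: ifP => _; first by rewrite divr_ge0 // subr_ge0 ler_nat.
  by case: ifP => _; rewrite ?divr_ge0.
case: ifP => _; first by case: ifP => _; rewrite ?divr_ge0.
case: pickP => [l _|_ //]; case: ifP => _; rewrite ?divr_ge0 ?mulr_ge0 //.
by rewrite subr_ge0 ler_nat (leq_trans (leq_subr _ _)).
Qed.

Lemma P_decr1 x : P R k x (decr1 x) = pdown x.
Proof.
have no_incr : [exists l, decr1 x == incr x l] = false.
  by apply/negbTE/existsP => -[l]; rewrite (negbTE (decr1_neq_incr x l)).
rewrite /P /pdown eqxx no_incr; case: ifP => // _.
case: pickP => [l|_]; first by rewrite (negbTE (decr1_neq_incr x l)).
by rewrite if_same.
Qed.

Lemma P_incr x l : P R k x (incr x l) =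
  if nzeros x == 0%N then 1 / k%:R
  else if nzeros x == n.-1 then 1 / (n.-1)%:R
  else if x l == 0%N then (k%:R - (n.-1 - nzeros x)%:R) / (k%:R * (nzeros x)%:R)
  else 1 / k%:R.
Proof.
rewrite /P (eq_sym (incr x l)) (negbTE (decr1_neq_incr x l)).
have -> : [exists l', incr x l == incr x l'] by apply/existsP; exists l.
by case: pickP => [l' /eqP/incr_inj <- //|/(_ l)]; rewrite eqxx.
Qed.

Lemma P_eq0 x y : y != decr1 x -> (forall l, y != incr x l) -> P R k x y = 0.
Proof.
move=> /negbTE not_decr not_incr.
have no_incr : [exists l, y == incr x l] = false.
  by apply/negbTE/existsP => -[l]; rewrite (negbTE (not_incr l)).
rewrite /P not_decr no_incr; case: pickP => [l|_]; last by rewrite !if_same.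
by rewrite (negbTE (not_incr l)).
Qed.

Lemma pdown_add_pup x : pdown x + pup x = 1.
Proof.
have n1_neq0 : (n.-1)%:R != 0 :> R by rewrite pnatr_eq0 -lt0n; lia.
rewrite /pdown /pup; under eq_bigr do rewrite P_incr.
have [_|j_neq0] := eqVneq (nzeros x) 0%N.
  by rewrite sumr_const card_ord -(mulr_natl (1 / k%:R)); field; exact: k_neq0.
rewrite add0r; have [_|j_neqn] := eqVneq (nzeros x) n.-1.
  by rewrite sumr_const card_ord -(mulr_natl (1 / _)); field.
rewrite sumr_if -nzerosE -(mulr_natl (1 / k%:R)) -(mulr_natl (_ / _)).
have j_neq0' : (nzeros x)%:R != 0 :> R by rewrite pnatr_eq0.
by rewrite natrB ?nzeros_le //; field; rewrite k_neq0 j_neq0'.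
Qed.

Lemma pdown_ge0 x : 0 <= pdown x.
Proof. by rewrite -P_decr1 P_ge0. Qed.

Lemma pup_ge0 x : 0 <= pup x.
Proof. by rewrite sumr_ge0 // => l _; exact: P_ge0. Qed.

Lemma esum_P x (A : set (state n)) :
  \esum_(y in A) (P R k x y)%:E =
  ((if decr1 x \in A then pdown x else 0) +
   \sum_(l < n.-1 | incr x l \in A) P R k x (incr x l))%:E.
Proof.
set s := decr1 x :: [seq incr x l | l <- enum 'I_n.-1].
have s_uniq : uniq s.
  rewrite /= map_inj_uniq ?enum_uniq ?andbT; last exact: incr_inj.
  by apply/mapP => -[l _ /eqP]; rewrite (negbTE (decr1_neq_incr x l)).
rewrite (esum_seq_supp s) // => [|y|y]; first last.
- rewrite inE negb_or => /andP[not_decr /mapP not_incr].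
  rewrite P_eq0 // => l; apply/eqP => y_incr.
  by apply: not_incr; exists l; rewrite ?mem_enum.
- by rewrite lee_fin P_ge0.
rewrite big_cons big_map big_enum_cond /= P_decr1 EFinD sumEFin.
by case: ifP => _; rewrite ?add0e.
Qed.

Lemma P_stochastic x : \esum_(y in [set: state n]) (P R k x y)%:E = 1%E.
Proof.
rewrite esum_P in_setT (eq_bigl xpredT) => [|l]; last by rewrite in_setT.
by rewrite pdown_add_pup.
Qed.

Definition below m : set (state n) := [set y | (height y <= m)%N].

Lemma in_below y m : (y \in below m) = (height y <= m)%N.
Proof. by apply/idP/idP => [/set_mem|/mem_set]. Qed.

Lemma esum_P_above x m : (height x <= m)%N ->
  \esum_(y in ~` below m) (P R k x y)%:E = (if height x == m then pup x else 0)%:E.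
Proof.
move=> x_below; rewrite esum_P in_setC in_below (leq_trans (height_decr1 x)) //=.
have up l : (incr x l \in ~` below m) = (height x == m).
  by rewrite in_setC in_below height_incr -ltnNge ltnS eqn_leq x_below.
rewrite add0r; under eq_bigl do rewrite up.
by case: eqP => _; rewrite ?big_pred0_eq.
Qed.

Lemma esum_P_below x m : ~~ (height x <= m)%N ->
  \esum_(y in below m) (P R k x y)%:E =
  (if (height x <= m + n.-1)%N then pdown x else 0)%:E.
Proof.
move=> x_above; rewrite esum_P big_pred0 => [|l]; last first.
  by rewrite in_below height_incr; apply: contraNF x_above; exact: ltnW.
rewrite addr0 in_below; have [x_R0|x_notR0] := eqVneq (nzeros x) 0%N.
  by rewrite -(height_decr1_R0 x x_R0) leq_add2r.
by rewrite /pdown (negbTE x_notR0) !if_same.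
Qed.

Variable pi : state n -> R.
Hypotheses (pi_ge0 : forall x, 0 <= pi x)
  (pi_sum1 : \esum_(x in [set: state n]) (pi x)%:E = 1%E)
  (pi_invariant : forall y,
     \esum_(x in [set: state n]) ((pi x)%:E * (P R k x y)%:E)%E = (pi y)%:E).

Lemma level_balance m :
  \esum_(x in [set: state n]) (if height x == m then pi x * pup x else 0)%:E =
  \esum_(x in [set: state n])
    (if (m < height x <= m + n.-1)%N then pi x * pdown x else 0)%:E.
Proof.
have up_flow : flow (P R k) pi (below m) (~` below m) =
    \esum_(x in [set: state n]) (if height x == m then pi x * pup x else 0)%:E.
  rewrite /flow esum_mkcond; apply: eq_esum => x _; rewrite in_below.
  case: ifPn => x_below; first by rewrite esum_P_above // -EFinM; case: ifP; rewrite ?mulr0.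
  by rewrite ifF //; apply: contraNF x_below => /eqP ->.
have down_flow : flow (P R k) pi (~` below m) (below m) =
    \esum_(x in [set: state n])
      (if (m < height x <= m + n.-1)%N then pi x * pdown x else 0)%:E.
  rewrite /flow esum_mkcond; apply: eq_esum => x _; rewrite in_setC in_below.
  case: leqP => //= x_above.
  by rewrite esum_P_below -?ltnNge // -EFinM; case: ifP; rewrite ?mulr0.
rewrite -up_flow -down_flow; apply: flow_balance => //; [exact: P_ge0|exact: P_stochastic].
Qed.

Lemma esum_pup : \esum_(x in [set: state n]) (pi x * pup x)%:E =
  ((n.-1)%:R%:E * \esum_(x in [set: state n]) (pi x * pdown x)%:E)%E.
Proof.
rewrite -esumZl // => [|x]; last by rewrite lee_fin mulr_ge0 ?pdown_ge0.
transitivity (\esum_(m in [set: nat]) \esum_(x in [set: state n])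
    (if height x == m then pi x * pup x else 0)%:E).
  rewrite exchange_esum => [|m x]; last by rewrite lee_fin; case: ifP; rewrite ?mulr_ge0 ?pup_ge0.
  apply: eq_esum => x _; under eq_esum do rewrite eq_sym (fun_if EFin).
  by rewrite esum_delta // lee_fin mulr_ge0 ?pup_ge0.
under eq_esum do rewrite level_balance.
rewrite exchange_esum => [|m x]; last by rewrite lee_fin; case: ifP; rewrite ?mulr_ge0 ?pdown_ge0.
apply: eq_esum => x _; under eq_esum do rewrite (fun_if EFin).
have [x_R0|x_notR0] := eqVneq (nzeros x) 0%N.
  rewrite esum_window ?mule_natl ?lee_fin ?mulr_ge0 ?pdown_ge0 //.
  by rewrite -(height_decr1_R0 x x_R0) leq_addl.
rewrite /pdown (negbTE x_notR0) mulr0 mule0; apply: esum1 => m _.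
by rewrite if_same.
Qed.

Lemma esum_pdown : \esum_(x in [set: state n]) (pi x * pdown x)%:E =
  (((k%:R - (n.-1)%:R) / k%:R)%:E * \esum_(x in @R0 n) (pi x)%:E)%E.
Proof.
rewrite -esumZl => [||x]; last 2 first.
- by rewrite divr_ge0 // subr_ge0 ler_nat; lia.
- by rewrite lee_fin.
rewrite [RHS]esum_mkcond; apply: eq_esum => x _.
have [x_R0|x_notR0] := eqVneq (nzeros x) 0%N.
  by rewrite ifT ?mem_set // -EFinM mulrC /pdown x_R0.
rewrite ifF ?mule0; last by apply/negbTE/negP => /set_mem /eqP; exact/negP.
by rewrite /pdown (negbTE x_notR0) mulr0.
Qed.

Lemma R0_mass :
  ((k%:R - (n.-1)%:R)%:E * \esum_(x in @R0 n) (pi x)%:E)%E = (k%:R / n%:R)%:E.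
Proof.
set D := \esum_(x in [set: state n]) (pi x * pdown x)%:E.
have total : (\esum_(x in [set: state n]) (pi x * pup x)%:E + D = 1)%E.
  rewrite -esumD => [|x _|x _]; rewrite ?lee_fin ?mulr_ge0 ?pup_ge0 ?pdown_ge0 //.
  by under eq_esum do rewrite -EFinD -mulrDr addrC pdown_add_pup mulr1.
have D_fin : D \is a fin_num.
  rewrite ge0_fin_numE ?esum_ge0 // => [|x _]; last by rewrite lee_fin mulr_ge0 ?pdown_ge0.
  apply: (@le_lt_trans _ _ 1%E); last exact: ltry.
  by rewrite -total leeDr // esum_ge0 // => x _; rewrite lee_fin mulr_ge0 ?pup_ge0.
have D_eq : D = (n%:R^-1)%:E.
  have n_neq0 : n%:R != 0 :> R by rewrite pnatr_eq0 -lt0n; lia.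
  have nD : n%:R * fine D = 1.
    have -> : n%:R = (n.-1)%:R + 1 :> R by rewrite natr1 prednK //; lia.
    by apply: EFin_inj; rewrite mulrDl mul1r EFinD EFinM fineK // -esum_pup.
  rewrite -(fineK D_fin); congr EFin.
  by apply: (mulfI n_neq0); rewrite nD mulfV.
have -> : (k%:R - (n.-1)%:R)%:E = (k%:R%:E * ((k%:R - (n.-1)%:R) / k%:R)%:E)%E :> \bar R.
  by rewrite -EFinM mulrC divfK // k_neq0.
by rewrite -muleA -esum_pdown -/D D_eq -EFinM.
Qed.

End switch_chain.

Theorem proposition5p1 (R : realType) (n k : nat) (mu q : R) (pi : state n -> R) :
  (3 <= n)%N -> (n <= k)%N -> 0 < mu -> 0 <= q <= 1 ->
  stable R n k -> stationary_distribution k pi ->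
  ((q * mu * (k%:R - (n.-1)%:R))%:E * \esum_(x in @R0 n) (pi x)%:E)%E
    = (q * mu * k%:R / n%:R)%:E.
Proof.
move=> n_ge3 n_le_k _ _ _ [pi_ge0 [pi_sum1 pi_invariant]].
by rewrite EFinM -muleA R0_mass ?(ltnW n_ge3) // -EFinM mulrA.
Qed.
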